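(* The local homeomorphism $f:D\to Y$ is a homeomorphism of $D$ onto $Y$ if and only if the auxiliary flow $\Phi$ is a global dynamical system, i.e. $D_\Phi=D\times\mathbb R$.
   Context: Standing setting: $X,Y$ are real Banach spaces, $D\subseteq X$ is a nonempty open connected set, $f:D\to Y$ is a local homeomorphism (every point has an open neighbourhood mapped homeomorphically onto an open set), $x_0\in D$, $y_0=f(x_0)$. A flow in $D$ is a map $\Phi:D_\Phi\to D$ such that: (i) $D_\Phi$ is an open subset of $D\times\mathbb R$ and $\Phi$ is continuous; (ii) for each $x\in D$, $\{t:(x,t)\in D_\Phi\}$ is an interval containing $0$; (iii) $\Phi(x,0)=x$; (iv) if $(x,t_1),(x,t_1+t_2)\in D_\Phi$ then $(\Phi(x,t_1),t_2)\in D_\Phi$ and $\Phi(\Phi(x,t_1),t_2)=\Phi(x,t_1+t_2)$. Let $\Psi(y,t)=y_0+e^{-t}(y-y_0)$ for $y\in Y,t\in\mathbb R$. The auxiliary flow $\Phi$ is the unique flow in $D$ of maximal domain with $f(\Phi(x,t))=\Psi(f(x),t)$ for all $(x,t)\in D_\Phi$; for each $x$, $t\mapsto\Phi(x,t)$ is the maximal continuous lifting by $f$ of $t\mapsto\Psi(f(x),t)$ through $x$ at $t=0$. *)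

From Stdlib Require Import Reals.
Open Scope R_scope.

Record NormedSpace := {
  carrier :> Type;
  vzero : carrier;
  vadd : carrier -> carrier -> carrier;
  vopp : carrier -> carrier;
  vscal : R -> carrier -> carrier;
  vnorm : carrier -> R;
  vadd_assoc : forall x y z, vadd x (vadd y z) = vadd (vadd x y) z;
  vadd_comm : forall x y, vadd x y = vadd y x;
  vadd_zero : forall x, vadd x vzero = x;
  vadd_opp : forall x, vadd x (vopp x) = vzero;
  vscal_one : forall x, vscal 1 x = x;
  vscal_assoc : forall a b x, vscal a (vscal b x) = vscal (a * b) x;
  vscal_distr_l : forall a b x, vscal (a + b) x = vadd (vscal a x) (vscal b x);
  vscal_distr_r : forall a x y, vscal a (vadd x y) = vadd (vscal a x) (vscal a y);
  vnorm_eq0 : forall x, vnorm x = 0 -> x = vzero;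
  vnorm_scal : forall a x, vnorm (vscal a x) = Rabs a * vnorm x;
  vnorm_triangle : forall x y, vnorm (vadd x y) <= vnorm x + vnorm y
}.

Arguments vzero {_}.
Arguments vadd {_} _ _.
Arguments vopp {_} _.
Arguments vscal {_} _ _.
Arguments vnorm {_} _.

Definition vsub {X : NormedSpace} (x y : X) : X := vadd x (vopp y).
Definition dist {X : NormedSpace} (x y : X) : R := vnorm (vsub x y).

Definition complete (X : NormedSpace) : Prop :=
  forall u : nat -> X,
    (forall eps, eps > 0 -> exists N, forall m n, (m >= N)%nat -> (n >= N)%nat ->
        dist (u m) (u n) < eps) ->
    exists l : X, forall eps, eps > 0 -> exists N, forall n, (n >= N)%nat ->
        dist (u n) l < eps.

Record BanachSpace := {
  bs_space :> NormedSpace;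
  bs_complete : complete bs_space
}.

Definition is_open {X : NormedSpace} (U : X -> Prop) : Prop :=
  forall x, U x -> exists eps, eps > 0 /\ forall y, dist y x < eps -> U y.

Definition is_open_prod {X : NormedSpace} (W : X -> R -> Prop) : Prop :=
  forall x t, W x t -> exists eps, eps > 0 /\
    forall y s, dist y x < eps -> Rabs (s - t) < eps -> W y s.

Definition is_connected {X : NormedSpace} (D : X -> Prop) : Prop :=
  forall A B : X -> Prop, is_open A -> is_open B ->
    (forall x, D x -> A x \/ B x) ->
    (forall x, D x -> A x -> B x -> False) ->
    (forall x, D x -> ~ A x) \/ (forall x, D x -> ~ B x).

Definition continuous_on {X Y : NormedSpace} (U : X -> Prop) (f : X -> Y) : Prop :=
  forall x, U x -> forall eps, eps > 0 -> exists delta, delta > 0 /\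
    forall y, U y -> dist y x < delta -> dist (f y) (f x) < eps.

Definition continuous_on2 {X Z : NormedSpace} (W : X -> R -> Prop) (F : X -> R -> Z) : Prop :=
  forall x t, W x t -> forall eps, eps > 0 -> exists delta, delta > 0 /\
    forall y s, W y s -> dist y x < delta -> Rabs (s - t) < delta ->
      dist (F y s) (F x t) < eps.

Definition local_homeomorphism {X Y : NormedSpace} (D : X -> Prop) (f : X -> Y) : Prop :=
  forall x, D x -> exists (U : X -> Prop) (V : Y -> Prop) (g : Y -> X),
    is_open U /\ U x /\ (forall u, U u -> D u) /\ is_open V /\
    (forall u, U u -> V (f u) /\ g (f u) = u) /\
    (forall v, V v -> U (g v) /\ f (g v) = v) /\
    continuous_on U f /\ continuous_on V g.

Definition homeomorphism_onto {X Y : NormedSpace} (D : X -> Prop) (f : X -> Y) : Prop :=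
  continuous_on D f /\
  exists g : Y -> X,
    (forall y, D (g y) /\ f (g y) = y) /\
    (forall x, D x -> g (f x) = x) /\
    continuous_on (fun _ => True) g.

(** A flow in D: Phi is meaningful on its domain DPhi ⊆ D x R. *)
Definition is_flow {X : NormedSpace} (D : X -> Prop)
    (DPhi : X -> R -> Prop) (Phi : X -> R -> X) : Prop :=
  (forall x t, DPhi x t -> D x) /\
  is_open_prod DPhi /\
  (forall x t, DPhi x t -> D (Phi x t)) /\
  continuous_on2 DPhi Phi /\
  (forall x, D x -> DPhi x 0) /\
  (forall x t1 t2 s, DPhi x t1 -> DPhi x t2 -> t1 <= s <= t2 -> DPhi x s) /\
  (forall x, D x -> Phi x 0 = x) /\
  (forall x t1 t2, DPhi x t1 -> DPhi x (t1 + t2) ->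
     DPhi (Phi x t1) t2 /\ Phi (Phi x t1) t2 = Phi x (t1 + t2)).

Definition Psi {Y : NormedSpace} (y0 : Y) (y : Y) (t : R) : Y :=
  vadd y0 (vscal (exp (- t)) (vsub y y0)).

Definition lifts_Psi {X Y : NormedSpace} (D : X -> Prop) (f : X -> Y) (y0 : Y)
    (DPhi : X -> R -> Prop) (Phi : X -> R -> X) : Prop :=
  is_flow D DPhi Phi /\
  forall x t, DPhi x t -> f (Phi x t) = Psi y0 (f x) t.

Definition auxiliary_flow {X Y : NormedSpace} (D : X -> Prop) (f : X -> Y) (y0 : Y)
    (DPhi : X -> R -> Prop) (Phi : X -> R -> X) : Prop :=
  lifts_Psi D f y0 DPhi Phi /\
  forall (DPhi' : X -> R -> Prop) (Phi' : X -> R -> X),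
    lifts_Psi D f y0 DPhi' Phi' -> forall x t, DPhi' x t -> DPhi x t.

(* If f is a homeomorphism, (x, t) |-> f^-1 (Psi (f x, t)) is a lifting flow defined for all
   times, so maximality of the auxiliary flow forces D_Phi = D x R.
   Conversely, take a local inverse g of f near x0 whose domain contains a ball B(y0, r).
   Psi contracts towards y0, so a lift starting in the chart over the ball never leaves the
   chart (real induction on the time, using that g undoes f on the chart).  Every y is pushed
   into the ball by Psi(., T) for T large, and G y := Phi (g (Psi y T)) (-T) does not depend
   on T.  G is a continuous right inverse of f, and {x in D | G (f x) = x} is open, closed in D
   and contains x0, hence is all of D by connectedness. *)

From Stdlib Require Import Reals Lra Classical.
Open Scope R_scope.

Section NormedSpaceFacts.
Variable N : NormedSpace.
Implicit Types (a b c x y z : N).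

Lemma vadd_0l x : vadd vzero x = x.
Proof. rewrite vadd_comm; apply vadd_zero. Qed.

Lemma vadd_oppl x : vadd (vopp x) x = vzero.
Proof. rewrite vadd_comm; apply vadd_opp. Qed.

Lemma vadd_cancel a b c : vadd a b = vadd a c -> b = c.
Proof.
  intro H. rewrite <- (vadd_0l b), <- (vadd_0l c), <- (vadd_oppl a).
  rewrite <- !vadd_assoc, H. reflexivity.
Qed.

Lemma vsub_addr a b : vsub (vadd a b) a = b.
Proof.
  unfold vsub. rewrite (vadd_comm _ a b), <- vadd_assoc, vadd_opp, vadd_zero.
  reflexivity.
Qed.

Lemma vadd_subr a b : vadd a (vsub b a) = b.
Proof.
  unfold vsub. rewrite vadd_comm, <- vadd_assoc, vadd_oppl, vadd_zero.
  reflexivity.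
Qed.

Lemma vscal0 x : vscal 0 x = vzero.
Proof.
  apply (vadd_cancel (vscal 0 x)). rewrite vadd_zero, <- vscal_distr_l.
  f_equal; ring.
Qed.

Lemma vopp_scal x : vopp x = vscal (-1) x.
Proof.
  apply (vadd_cancel x). rewrite vadd_opp.
  rewrite <- (vscal_one N x) at 1. rewrite <- vscal_distr_l.
  replace (1 + -1) with 0 by ring. symmetry; apply vscal0.
Qed.

Lemma vnorm0 : vnorm (@vzero N) = 0.
Proof. rewrite <- (vscal0 vzero), vnorm_scal, Rabs_R0. ring. Qed.

Lemma vnorm_opp x : vnorm (vopp x) = vnorm x.
Proof. rewrite vopp_scal, vnorm_scal, Rabs_left by lra. ring. Qed.

Lemma vnorm_ge0 x : 0 <= vnorm x.
Proof.
  pose proof (vnorm_triangle N x (vopp x)) as H.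
  rewrite vadd_opp, vnorm0, vnorm_opp in H. lra.
Qed.

Lemma vscal_sub (k : R) a b : vscal k (vsub a b) = vsub (vscal k a) (vscal k b).
Proof.
  unfold vsub. rewrite vscal_distr_r. f_equal.
  rewrite !vopp_scal, !vscal_assoc. f_equal; ring.
Qed.

Lemma vopp_sub x y : vopp (vsub x y) = vsub y x.
Proof.
  rewrite vopp_scal. unfold vsub. rewrite vscal_distr_r, vadd_comm. f_equal.
  - rewrite vopp_scal, vscal_assoc. replace (-1 * -1) with 1 by ring.
    apply vscal_one.
  - symmetry; apply vopp_scal.
Qed.

Lemma dist_sym x y : dist x y = dist y x.
Proof. unfold dist. rewrite <- vopp_sub, vnorm_opp. reflexivity. Qed.

Lemma dist_triangle x y z : dist x z <= dist x y + dist y z.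
Proof.
  unfold dist. replace (vsub x z) with (vadd (vsub x y) (vsub y z)).
  - apply vnorm_triangle.
  - unfold vsub. rewrite <- vadd_assoc. f_equal.
    rewrite vadd_assoc, vadd_oppl, vadd_0l. reflexivity.
Qed.

Lemma dist_eq0 x y : dist x y = 0 -> x = y.
Proof.
  intro H. apply vnorm_eq0 in H.
  rewrite <- (vadd_subr y x), H, vadd_zero. reflexivity.
Qed.

Lemma dist_self x : dist x x = 0.
Proof. unfold dist, vsub. rewrite vadd_opp. apply vnorm0. Qed.

Lemma dist_ge0 x y : 0 <= dist x y.
Proof. apply vnorm_ge0. Qed.

Lemma dist_pos x y : x <> y -> 0 < dist x y.
Proof.
  intro Hxy. destruct (Rle_lt_or_eq_dec _ _ (dist_ge0 x y)) as [H | H]; [exact H |].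
  exfalso. apply Hxy, dist_eq0. auto.
Qed.

Lemma dist_vaddl c a b : dist (vadd c a) (vadd c b) = dist a b.
Proof.
  unfold dist. f_equal. symmetry.
  apply (vadd_cancel (vadd c b)). rewrite vadd_subr, <- vadd_assoc, vadd_subr.
  reflexivity.
Qed.

Lemma dist_vaddl_self c a : dist (vadd c a) c = vnorm a.
Proof. unfold dist. rewrite vsub_addr. reflexivity. Qed.

Lemma dist_vsubr a b c : dist (vsub a c) (vsub b c) = dist a b.
Proof. unfold vsub at 1 2. rewrite (vadd_comm _ a), (vadd_comm _ b). apply dist_vaddl. Qed.

Lemma dist_vscal (k : R) a b : dist (vscal k a) (vscal k b) = Rabs k * dist a b.
Proof. unfold dist. rewrite <- vscal_sub, vnorm_scal. reflexivity. Qed.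

Lemma dist_vscalr (k m : R) a : dist (vscal k a) (vscal m a) = Rabs (k - m) * vnorm a.
Proof.
  unfold dist, vsub. rewrite vopp_scal, vscal_assoc, <- vscal_distr_l, vnorm_scal.
  f_equal; f_equal; ring.
Qed.

End NormedSpaceFacts.
Lemma exp_opp_continuous (t eps : R) : eps > 0 -> exists delta, delta > 0 /\
  forall s, Rabs (s - t) < delta -> Rabs (exp (- s) - exp (- t)) < eps.
Proof.
  intro He.
  destruct (derivable_continuous exp derivable_exp (- t) eps He) as [d [Hd Hexp]].
  exists d. split; [exact Hd |]. intros s Hs.
  destruct (Req_dec s t) as [-> | Hne].
  - unfold Rminus. rewrite Rplus_opp_r, Rabs_R0. exact He.
  - apply (Hexp (- s)). split.
    + split; [exact I | intro E; apply Hne; lra].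
    + simpl. unfold R_dist. replace (- s - - t) with (- (s - t)) by ring.
      rewrite Rabs_Ropp. exact Hs.
Qed.

Section PsiFacts.
Variables (N : NormedSpace) (y0 : N).
Implicit Types (y : N).

Lemma Psi_0 y : Psi y0 y 0 = y.
Proof. unfold Psi. rewrite Ropp_0, exp_0, vscal_one. apply vadd_subr. Qed.

Lemma Psi_comp y s t : Psi y0 (Psi y0 y s) t = Psi y0 y (s + t).
Proof.
  unfold Psi at 1 2. rewrite vsub_addr, vscal_assoc, <- exp_plus.
  unfold Psi. do 3 f_equal. ring.
Qed.

Lemma dist_Psi y y' t : dist (Psi y0 y t) (Psi y0 y' t) = exp (- t) * dist y y'.
Proof.
  unfold Psi. rewrite dist_vaddl, dist_vscal, dist_vsubr, Rabs_pos_eq; [reflexivity |].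
  left; apply exp_pos.
Qed.

Lemma dist_Psi_center y t : dist (Psi y0 y t) y0 = exp (- t) * dist y y0.
Proof.
  unfold Psi. rewrite dist_vaddl_self, vnorm_scal, Rabs_pos_eq; [reflexivity |].
  left; apply exp_pos.
Qed.

Lemma dist_Psi_center_le y t : 0 <= t -> dist (Psi y0 y t) y0 <= dist y y0.
Proof.
  intro Ht. rewrite dist_Psi_center.
  assert (exp (- t) <= 1).
  { rewrite <- exp_0. destruct (Req_dec t 0) as [-> | Hne]; [rewrite Ropp_0; lra |].
    left; apply exp_increasing; lra. }
  pose proof (dist_ge0 _ y y0). nra.
Qed.

Lemma Psi_continuous y t eps : eps > 0 ->
  exists delta, delta > 0 /\ forall y' s, dist y' y < delta -> Rabs (s - t) < delta ->
    dist (Psi y0 y' s) (Psi y0 y t) < eps.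
Proof.
  intro He. set (M := dist y y0). assert (HM : 0 <= M) by apply dist_ge0.
  destruct (exp_opp_continuous t (eps / 2 / (M + 1))) as [d1 [Hd1 Hexp]].
  { apply Rdiv_lt_0_compat; lra. }
  set (K := exp (- t + 1)). assert (HK : 0 < K) by apply exp_pos.
  exists (Rmin 1 (Rmin d1 (eps / 2 / K))). split.
  { apply Rmin_pos; [lra | apply Rmin_pos; [lra | apply Rdiv_lt_0_compat; lra]]. }
  intros y' s Hy Hs.
  pose proof (Rmin_l 1 (Rmin d1 (eps / 2 / K))).
  pose proof (Rmin_r 1 (Rmin d1 (eps / 2 / K))).
  pose proof (Rmin_l d1 (eps / 2 / K)). pose proof (Rmin_r d1 (eps / 2 / K)).
  (* Move first in space at time [s], then in time along the ray through [y]. *)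
  eapply Rle_lt_trans; [apply (dist_triangle _ _ (Psi y0 y s)) |].
  rewrite dist_Psi. unfold Psi at 1 2.
  rewrite dist_vaddl, dist_vscalr. fold (dist y y0 : R). fold M.
  assert (Hexp_s : exp (- s) <= K).
  { apply Rlt_le, exp_increasing. apply Rabs_def2 in Hs. lra. }
  assert (A1 : exp (- s) * dist y' y < eps / 2).
  { apply Rle_lt_trans with (K * dist y' y).
    - apply Rmult_le_compat_r; [apply dist_ge0 | exact Hexp_s].
    - replace (eps / 2) with (K * (eps / 2 / K)) by (field; lra).
      apply Rmult_lt_compat_l; lra. }
  assert (A2 : Rabs (exp (- s) - exp (- t)) * M < eps / 2).
  { assert (Hx : Rabs (exp (- s) - exp (- t)) < eps / 2 / (M + 1)) by (apply Hexp; lra).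
    apply Rle_lt_trans with (Rabs (exp (- s) - exp (- t)) * (M + 1)).
    - apply Rmult_le_compat_l; [apply Rabs_pos | lra].
    - replace (eps / 2) with (eps / 2 / (M + 1) * (M + 1)) by (field; lra).
      apply Rmult_lt_compat_r; lra. }
  lra.
Qed.

End PsiFacts.

Definition continuous_at {X Y : NormedSpace} (f : X -> Y) (x : X) : Prop :=
  forall eps, eps > 0 -> exists delta, delta > 0 /\
    forall y, dist y x < delta -> dist (f y) (f x) < eps.

Lemma continuous_at_comp {X Y Z : NormedSpace} (f : X -> Y) (h : Y -> Z) (x : X) :
  continuous_at f x -> continuous_at h (f x) -> continuous_at (fun y => h (f y)) x.
Proof.
  intros Hf Hh eps He.
  destruct (Hh eps He) as [d [Hd Hh']]. destruct (Hf d Hd) as [d' [Hd' Hf']].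
  exists d'. split; [exact Hd' |]. intros y Hy. apply Hh', Hf', Hy.
Qed.

Lemma continuous_on_of_at {X Y : NormedSpace} (U : X -> Prop) (f : X -> Y) :
  (forall x, U x -> continuous_at f x) -> continuous_on U f.
Proof.
  intros Hf x Hx eps He. destruct (Hf x Hx eps He) as [d [Hd H]].
  exists d. split; [exact Hd |]. intros y _; apply H.
Qed.

Lemma continuous_on_open_at {X Y : NormedSpace} (U : X -> Prop) (f : X -> Y) (x : X) :
  is_open U -> continuous_on U f -> U x -> continuous_at f x.
Proof.
  intros HUo Hf Hx eps He.
  destruct (HUo x Hx) as [rho [Hrho HU]]. destruct (Hf x Hx eps He) as [d [Hd H]].
  exists (Rmin rho d). split; [apply Rmin_pos; assumption |].
  intros y Hy. pose proof (Rmin_l rho d). pose proof (Rmin_r rho d).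
  apply H; [apply HU |]; lra.
Qed.

Lemma local_homeomorphism_continuous_at {X Y : NormedSpace} (D : X -> Prop) (f : X -> Y)
  (x : X) : local_homeomorphism D f -> D x -> continuous_at f x.
Proof.
  intros Hf Hx. destruct (Hf x Hx) as [U [_ [_ [HUo [HUx [_ [_ [_ [_ [HfU _]]]]]]]]]].
  exact (continuous_on_open_at U f x HUo HfU HUx).
Qed.

Lemma homeomorphism_lifts_Psi {X Y : NormedSpace} (D : X -> Prop) (f : X -> Y) (y0 : Y)
  (g : Y -> X) :
  is_open D -> continuous_on D f ->
  (forall y, D (g y) /\ f (g y) = y) -> (forall x, D x -> g (f x) = x) ->
  continuous_on (fun _ => True) g ->
  lifts_Psi D f y0 (fun x _ => D x) (fun x t => g (Psi y0 (f x) t)).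
Proof.
  intros HDo Hfc Hfg Hgf Hgc. split; [| intros x t _; apply Hfg].
  repeat split; try (intros; assumption); try (intros; apply Hfg).
  - intros x t Hx. destruct (HDo x Hx) as [e [He HB]].
    exists e. split; [exact He |]. intros y s Hy _; apply HB, Hy.
  - intros x t Hx eps He.
    destruct (Hgc (Psi y0 (f x) t) I eps He) as [dg [Hdg Hg]].
    destruct (Psi_continuous Y y0 (f x) t dg Hdg) as [dp [Hdp Hp]].
    destruct (Hfc x Hx dp Hdp) as [df [Hdf Hf]].
    exists (Rmin dp df). split; [apply Rmin_pos; assumption |].
    intros y s Hy Hyx Hs. pose proof (Rmin_l dp df). pose proof (Rmin_r dp df).
    apply Hg; [exact I |]. apply Hp; [apply Hf; [exact Hy | lra] | lra].
  - intros x Hx. rewrite Psi_0. apply Hgf, Hx.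
  - rewrite (proj2 (Hfg _)), Psi_comp. reflexivity.
Qed.

Lemma auxiliary_flow_global_of_homeomorphism {X Y : NormedSpace} (D : X -> Prop)
  (f : X -> Y) (y0 : Y) (DPhi : X -> R -> Prop) (Phi : X -> R -> X) :
  is_open D -> auxiliary_flow D f y0 DPhi Phi -> homeomorphism_onto D f ->
  forall x t, D x -> DPhi x t.
Proof.
  intros HDo [_ Hmax] [Hfc [g [Hfg [Hgf Hgc]]]].
  exact (Hmax _ _ (homeomorphism_lifts_Psi D f y0 g HDo Hfc Hfg Hgf Hgc)).
Qed.

Lemma real_induction (P : R -> Prop) :
  P 0 ->
  (forall m, 0 < m -> (forall t, 0 <= t < m -> P t) -> P m) ->
  (forall m, 0 <= m -> P m -> exists d, d > 0 /\ forall t, Rabs (t - m) < d -> P t) ->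
  forall T, 0 <= T -> P T.
Proof.
  intros P0 Pclosed Popen T HT. apply NNPP. intro HnT.
  set (E := fun tau => forall t, 0 <= t <= tau -> P t).
  assert (E0 : E 0) by (intros t Ht; replace t with 0 by lra; exact P0).
  assert (EleT : forall tau, E tau -> tau <= T).
  { intros tau Htau. apply Rnot_lt_le. intro Hlt. apply HnT, Htau. lra. }
  destruct (completeness E (ex_intro _ T EleT) (ex_intro _ 0 E0)) as [m [Hub Hlub]].
  assert (Hm0 : 0 <= m) by (apply Hub, E0).
  assert (Pbelow : forall t, 0 <= t < m -> P t).
  { intros t Ht. apply NNPP. intro Hnt.
    assert (m <= t); [| lra].
    apply Hlub. intros tau Htau. apply Rnot_lt_le. intro Hlt. apply Hnt, Htau. lra. }
  assert (Pm : P m).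
  { destruct (Req_dec m 0) as [-> | Hm]; [exact P0 |]. apply Pclosed; [lra | exact Pbelow]. }
  destruct (Popen m Hm0 Pm) as [d [Hd Hnear]].
  assert (E (m + d / 2)).
  { intros t Ht. destruct (Rlt_le_dec t m); [apply Pbelow; lra |].
    apply Hnear, Rabs_def1; lra. }
  assert (m + d / 2 <= m) by (apply Hub; assumption). lra.
Qed.

Lemma continuous_neq_open {X : NormedSpace} (D : X -> Prop) (h : X -> X) :
  is_open D -> (forall x, D x -> continuous_at h x) -> is_open (fun x => D x /\ h x <> x).
Proof.
  intros HDo Hh x [Hx Hne]. pose proof (dist_pos _ _ _ Hne) as Hd.
  set (d := dist (h x) x) in *.
  destruct (Hh x Hx (d / 3) ltac:(lra)) as [dh [Hdh Hnear]].
  destruct (HDo x Hx) as [dD [HdD HD]].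
  exists (Rmin dD (Rmin dh (d / 3))). split; [repeat apply Rmin_pos; lra |].
  intros x' Hx'.
  pose proof (Rmin_l dD (Rmin dh (d / 3))). pose proof (Rmin_r dD (Rmin dh (d / 3))).
  pose proof (Rmin_l dh (d / 3)). pose proof (Rmin_r dh (d / 3)).
  split; [apply HD; lra |]. intro Hfix.
  assert (Hhx' : dist (h x') (h x) < d / 3) by (apply Hnear; lra).
  pose proof (dist_triangle _ (h x) (h x') x) as Htri.
  rewrite dist_sym, Hfix in Hhx'. rewrite Hfix in Htri. fold d in Htri. lra.
Qed.

Section GlobalLiftingFlow.
Variables (X Y : NormedSpace) (D : X -> Prop) (f : X -> Y) (y0 : Y) (Phi : X -> R -> X).
Hypothesis D_open : is_open D.
Hypothesis f_continuous : forall x, D x -> continuous_at f x.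
Hypothesis Phi_D : forall x t, D x -> D (Phi x t).
Hypothesis Phi_continuous : continuous_on2 (fun x _ => D x) Phi.
Hypothesis Phi_0 : forall x, D x -> Phi x 0 = x.
Hypothesis Phi_comp : forall x s t, D x -> Phi (Phi x s) t = Phi x (s + t).
Hypothesis f_Phi : forall x t, D x -> f (Phi x t) = Psi y0 (f x) t.

Variables (U : X -> Prop) (V : Y -> Prop) (g : Y -> X) (r : R).
Hypothesis U_open : is_open U.
Hypothesis U_D : forall u, U u -> D u.
Hypothesis g_f : forall u, U u -> V (f u) /\ g (f u) = u.
Hypothesis f_g : forall v, V v -> U (g v) /\ f (g v) = v.
Hypothesis g_continuous : continuous_on V g.
Hypothesis r_pos : r > 0.
Hypothesis ball_V : forall y, dist y y0 < r -> V y.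

Lemma Phi_time_continuous x t eps : D x -> eps > 0 ->
  exists delta, delta > 0 /\ forall s, Rabs (s - t) < delta -> dist (Phi x s) (Phi x t) < eps.
Proof.
  intros Hx He. destruct (Phi_continuous x t Hx eps He) as [d [Hd H]].
  exists d. split; [exact Hd |]. intros s Hs. apply H; [exact Hx | rewrite dist_self; lra | exact Hs].
Qed.

Lemma chart_closed z : D z -> V (f z) ->
  (forall eps, eps > 0 -> exists p, U p /\ dist p z < eps) -> U z.
Proof.
  intros Hz HVz Hclose.
  enough (Hgz : g (f z) = z) by (rewrite <- Hgz; apply f_g, HVz).
  apply NNPP. intro Hne. pose proof (dist_pos _ _ _ Hne) as Hd.
  set (eps := dist (g (f z)) z / 2).
  destruct (g_continuous (f z) HVz eps ltac:(unfold eps; lra)) as [dg [Hdg Hg]].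
  destruct (f_continuous z Hz dg Hdg) as [df [Hdf Hf]].
  destruct (Hclose (Rmin eps df)) as [p [Hp Hpz]]; [apply Rmin_pos; unfold eps; lra |].
  pose proof (Rmin_l eps df). pose proof (Rmin_r eps df).
  destruct (g_f p Hp) as [HVp Hgp].
  assert (Hgp_near : dist (g (f p)) (g (f z)) < eps) by (apply Hg; [exact HVp | apply Hf; lra]).
  rewrite Hgp, dist_sym in Hgp_near.
  pose proof (dist_triangle _ (g (f z)) p z). unfold eps in *. lra.
Qed.

Lemma flow_stays_in_chart c T : U c -> dist (f c) y0 < r -> 0 <= T -> U (Phi c T).
Proof.
  intros Hc Hfc. assert (HDc : D c) by (apply U_D, Hc).
  apply (real_induction (fun t => U (Phi c t))).
  - rewrite Phi_0; assumption.
  - intros m Hm Hbelow. apply chart_closed; [apply Phi_D, HDc | |].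
    + apply ball_V. rewrite f_Phi by exact HDc.
      eapply Rle_lt_trans; [apply dist_Psi_center_le; lra | exact Hfc].
    + intros eps He.
      destruct (Phi_time_continuous c m eps HDc He) as [d [Hd Hnear]].
      exists (Phi c (Rmax 0 (m - d / 2))). split.
      * apply Hbelow. split; [apply Rmax_l |].
        unfold Rmax. destruct (Rle_dec 0 (m - d / 2)); lra.
      * apply Hnear. unfold Rmax. destruct (Rle_dec 0 (m - d / 2)); apply Rabs_def1; lra.
  - intros m _ Hm. destruct (U_open _ Hm) as [rho [Hrho HU]].
    destruct (Phi_time_continuous c m rho HDc Hrho) as [d [Hd Hnear]].
    exists d. split; [exact Hd |]. intros t Ht. apply HU, Hnear, Ht.
Qed.

Definition admissible (y : Y) (T : R) : Prop := dist (Psi y0 y T) y0 < r.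

Lemma admissible_near y T : admissible y T ->
  exists delta, delta > 0 /\ forall y', dist y' y < delta -> admissible y' T.
Proof.
  unfold admissible. intro Hadm.
  exists ((r - dist (Psi y0 y T) y0) / exp (- T)).
  split; [apply Rdiv_lt_0_compat; [lra | apply exp_pos] |].
  intros y' Hy'.
  pose proof (dist_triangle _ (Psi y0 y' T) (Psi y0 y T) y0) as Htri.
  rewrite dist_Psi in Htri.
  assert (exp (- T) * dist y' y < r - dist (Psi y0 y T) y0); [| lra].
  replace (r - dist (Psi y0 y T) y0)
    with (exp (- T) * ((r - dist (Psi y0 y T) y0) / exp (- T)))
    by (field; apply Rgt_not_eq, exp_pos).
  apply Rmult_lt_compat_l; [apply exp_pos | exact Hy'].
Qed.

(* Chosen so that [exp (- escape_time y) * dist y y0 = r * d / (r + d)] with [d = dist y y0]. *)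
Definition escape_time (y : Y) : R := ln (1 + dist y y0 / r).

Lemma escape_time_admissible y : admissible y (escape_time y).
Proof.
  unfold admissible, escape_time. set (d := dist y y0).
  assert (Hd : 0 <= d) by apply dist_ge0.
  assert (Hq : 0 < 1 + d / r).
  { assert (0 <= d / r) by (apply Rmult_le_pos; [lra | left; apply Rinv_0_lt_compat, r_pos]).
    lra. }
  rewrite dist_Psi_center, exp_Ropp, exp_ln by exact Hq. fold d.
  replace (/ (1 + d / r) * d) with (r - r * r / (r + d)) by (field; lra).
  assert (0 < r * r / (r + d)) by (apply Rdiv_lt_0_compat; nra).
  lra.
Qed.

Definition lift_back (T : R) (y : Y) : X := Phi (g (Psi y0 y T)) (- T).

Definition inverse_map (y : Y) : X := lift_back (escape_time y) y.

Lemma chart_Psi y T : admissible y T ->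
  U (g (Psi y0 y T)) /\ f (g (Psi y0 y T)) = Psi y0 y T.
Proof. intro Hadm. apply f_g, ball_V, Hadm. Qed.

Lemma lift_back_le y T1 T2 : T1 <= T2 -> admissible y T1 -> admissible y T2 ->
  lift_back T2 y = lift_back T1 y.
Proof.
  intros H12 Had1 Had2. destruct (chart_Psi y T1 Had1) as [Hc Hfc].
  set (c := g (Psi y0 y T1)) in *.
  assert (Hflow : g (Psi y0 y T2) = Phi c (T2 - T1)).
  { assert (Hu : U (Phi c (T2 - T1))) by (apply flow_stays_in_chart; [exact Hc | rewrite Hfc; exact Had1 | lra]).
    destruct (g_f _ Hu) as [_ Hgu].
    rewrite <- Hgu, f_Phi, Hfc, Psi_comp by (apply U_D, Hc).
    do 2 f_equal. ring. }
  unfold lift_back. rewrite Hflow, Phi_comp by (apply U_D, Hc).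
  fold c. f_equal. ring.
Qed.

Lemma lift_back_indep y T1 T2 : admissible y T1 -> admissible y T2 ->
  lift_back T1 y = lift_back T2 y.
Proof.
  intros Had1 Had2. destruct (Rle_dec T1 T2).
  - symmetry. apply lift_back_le; assumption.
  - apply lift_back_le; [lra | assumption | assumption].
Qed.

Lemma inverse_map_eq y T : admissible y T -> inverse_map y = lift_back T y.
Proof. apply lift_back_indep, escape_time_admissible. Qed.

Lemma inverse_map_D y : D (inverse_map y).
Proof. apply Phi_D, U_D, chart_Psi, escape_time_admissible. Qed.

Lemma f_inverse_map y : f (inverse_map y) = y.
Proof.
  destruct (chart_Psi y _ (escape_time_admissible y)) as [Hc Hfc].
  unfold inverse_map, lift_back. rewrite f_Phi, Hfc, Psi_comp by (apply U_D, Hc).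
  rewrite Rplus_opp_r. apply Psi_0.
Qed.

Lemma inverse_map_continuous y : continuous_at inverse_map y.
Proof.
  set (T := escape_time y). pose proof (escape_time_admissible y) as HT. fold T in HT.
  destruct (chart_Psi y T HT) as [Hc _].
  intros eps He.
  destruct (Phi_continuous _ (- T) (U_D _ Hc) eps He) as [dP [HdP HPhi]].
  destruct (g_continuous _ (ball_V _ HT) dP HdP) as [dg [Hdg Hg]].
  destruct (admissible_near y T HT) as [da [Hda Hnear]].
  exists (Rmin da (dg / exp (- T))).
  split; [apply Rmin_pos; [exact Hda | apply Rdiv_lt_0_compat; [lra | apply exp_pos]] |].
  intros y' Hy'. pose proof (Rmin_l da (dg / exp (- T))). pose proof (Rmin_r da (dg / exp (- T))).
  assert (HT' : admissible y' T) by (apply Hnear; lra).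
  rewrite (inverse_map_eq y' T HT'). unfold inverse_map, lift_back. fold T.
  apply HPhi; [apply U_D, chart_Psi, HT' | | rewrite Rminus_diag, Rabs_R0; exact HdP].
  apply Hg; [apply ball_V, HT' |].
  rewrite dist_Psi.
  replace dg with (exp (- T) * (dg / exp (- T))) by (field; apply Rgt_not_eq, exp_pos).
  apply Rmult_lt_compat_l; [apply exp_pos | lra].
Qed.

Lemma inverse_map_fixed_iff x T : D x -> admissible (f x) T ->
  (inverse_map (f x) = x <-> U (Phi x T)).
Proof.
  intros Hx Hadm. rewrite (inverse_map_eq _ T Hadm).
  destruct (chart_Psi _ T Hadm) as [Hc Hfc]. unfold lift_back.
  split.
  - intro Hfix. rewrite <- Hfix, Phi_comp, Rplus_opp_l, Phi_0 by (apply U_D, Hc). exact Hc.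
  - intro Hu. destruct (g_f _ Hu) as [_ Hgu].
    rewrite f_Phi in Hgu by exact Hx. rewrite Hgu, Phi_comp, Rplus_opp_r by exact Hx.
    apply Phi_0, Hx.
Qed.

Lemma fixed_set_open : is_open (fun x => D x /\ inverse_map (f x) = x).
Proof.
  intros x [Hx Hfix]. set (T := escape_time (f x)).
  pose proof (escape_time_admissible (f x)) as HT. fold T in HT.
  apply (inverse_map_fixed_iff x T Hx HT) in Hfix.
  destruct (U_open _ Hfix) as [rho [Hrho HU]].
  destruct (Phi_continuous x T Hx rho Hrho) as [dP [HdP HPhi]].
  destruct (admissible_near _ T HT) as [da [Hda Hnear]].
  destruct (f_continuous x Hx da Hda) as [df [Hdf Hf]].
  destruct (D_open x Hx) as [dD [HdD HD]].
  exists (Rmin dD (Rmin dP df)). split; [repeat apply Rmin_pos; assumption |].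
  intros x' Hx'.
  pose proof (Rmin_l dD (Rmin dP df)). pose proof (Rmin_r dD (Rmin dP df)).
  pose proof (Rmin_l dP df). pose proof (Rmin_r dP df).
  assert (HDx' : D x') by (apply HD; lra).
  split; [exact HDx' |].
  apply (inverse_map_fixed_iff x' T HDx'); [apply Hnear, Hf; lra |].
  apply HU, HPhi; [exact HDx' | lra | rewrite Rminus_diag, Rabs_R0; exact HdP].
Qed.

Lemma inverse_map_f x0 : is_connected D -> D x0 -> U x0 -> f x0 = y0 ->
  forall x, D x -> inverse_map (f x) = x.
Proof.
  intros HDconn Hx0 HUx0 Hfx0.
  assert (Hfix0 : inverse_map (f x0) = x0).
  { apply (inverse_map_fixed_iff x0 0 Hx0); [| rewrite Phi_0; assumption].
    unfold admissible. rewrite Hfx0, Psi_0, dist_self. lra. }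
  assert (Hcont : forall x, D x -> continuous_at (fun x => inverse_map (f x)) x).
  { intros x Hx. apply continuous_at_comp; [apply f_continuous, Hx | apply inverse_map_continuous]. }
  destruct (HDconn _ _ fixed_set_open (continuous_neq_open D _ D_open Hcont)) as [Hnone | Hnone].
  - intros x Hx. destruct (classic (inverse_map (f x) = x)); [left | right]; split; assumption.
  - intros x _ [_ Hfix] [_ Hnfix]. exact (Hnfix Hfix).
  - exfalso. apply (Hnone x0 Hx0). split; assumption.
  - intros x Hx. apply NNPP. intro Hnfix. apply (Hnone x Hx). split; assumption.
Qed.

End GlobalLiftingFlow.

Lemma homeomorphism_of_global_lifting_flow {X Y : NormedSpace} (D : X -> Prop) (f : X -> Y)
  (x0 : X) (DPhi : X -> R -> Prop) (Phi : X -> R -> X) :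
  is_open D -> is_connected D -> D x0 -> local_homeomorphism D f ->
  lifts_Psi D f (f x0) DPhi Phi -> (forall x t, D x -> DPhi x t) ->
  homeomorphism_onto D f.
Proof.
  intros HDo HDconn Hx0 Hf [[_ [_ [HPhi_dom [Hcont_dom [_ [_ [Phi_0 Hcomp_dom]]]]]]] Hlift_dom]
    Hglob.
  assert (f_continuous : forall x, D x -> continuous_at f x)
    by (intros x Hx; exact (local_homeomorphism_continuous_at D f x Hf Hx)).
  assert (Phi_D : forall x t, D x -> D (Phi x t)) by auto.
  assert (Phi_continuous : continuous_on2 (fun x _ => D x) Phi).
  { intros x t Hx eps He. destruct (Hcont_dom x t (Hglob x t Hx) eps He) as [d [Hd H]].
    exists d. split; [exact Hd |]. intros y s Hy. apply H, Hglob, Hy. }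
  assert (Phi_comp : forall x s t, D x -> Phi (Phi x s) t = Phi x (s + t))
    by (intros; apply Hcomp_dom; apply Hglob; assumption).
  assert (f_Phi : forall x t, D x -> f (Phi x t) = Psi (f x0) (f x) t) by auto.
  destruct (Hf x0 Hx0) as [U [V [g [HUo [HUx0 [HUD [HVo [Hgf [Hfg [_ Hgc]]]]]]]]]].
  destruct (HVo (f x0) (proj1 (Hgf x0 HUx0))) as [r [Hr Hball]].
  split; [apply continuous_on_of_at, f_continuous |].
  exists (inverse_map X Y (f x0) Phi g r). repeat split.
  - eapply inverse_map_D; eauto.
  - eapply f_inverse_map; eauto.
  - eapply inverse_map_f; eauto.
  - apply continuous_on_of_at. intros y _. eapply inverse_map_continuous; eauto.
Qed.

Theorem proposition2p2 (X Y : BanachSpace) (D : X -> Prop) (f : X -> Y) (x0 : X)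
  (HDopen : is_open D) (HDconn : is_connected D) (Hx0 : D x0)
  (Hf : local_homeomorphism D f)
  (DPhi : X -> R -> Prop) (Phi : X -> R -> X)
  (HPhi : auxiliary_flow D f (f x0) DPhi Phi) :
  homeomorphism_onto D f <-> (forall x t, D x -> DPhi x t).
Proof.
  split.
  - exact (auxiliary_flow_global_of_homeomorphism D f (f x0) DPhi Phi HDopen HPhi).
  - exact (homeomorphism_of_global_lifting_flow D f x0 DPhi Phi HDopen HDconn Hx0 Hf
             (proj1 HPhi)).
Qed.
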